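(* Every digraph $D$ with minimum out-degree $\delta^+(D) \ge 2$ contains a subdivision of $\overleftrightarrow{K}_3 - e$.
   Context: Digraphs are finite, loopless, have no parallel arcs, but may contain digons (pairs of anti-parallel arcs). $\overleftrightarrow{K}_3$ is the bioriented triangle: the digraph on three vertices containing both arcs $(u,v)$ and $(v,u)$ for every pair of distinct vertices; $\overleftrightarrow{K}_3 - e$ is the digraph obtained from it by deleting a single arc. A subdivision of a digraph $F$ is a digraph obtained by replacing each arc $(x,y)$ of $F$ by a directed path from $x$ to $y$, such that the paths corresponding to different arcs are internally vertex-disjoint. $\delta^+(D)$ denotes the minimum out-degree of $D$. *)

From mathcomp Require Import all_boot.
Set Implicit Arguments. Unset Strict Implicit. Unset Printing Implicit Defensive.

(* Looplessness is imposed as a hypothesis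
   (irreflexive e); no parallel arcs is automatic; digons are allowed. *)

Definition outdeg (V : finType) (e : rel V) (v : V) : nat := #|[set w | e v w]|.

Definition dipath (V : finType) (e : rel V) (x y : V) (s : seq V) : bool :=
  path e x (rcons s y) && uniq (x :: rcons s y).

(* Branch vertices a, b, c; arcs of K3<->-e: ab, ba, bc, cb, ac (the arc ca
   is deleted; all choices of deleted arc give isomorphic digraphs). *)
Definition has_subdiv_K3_minus_e (V : finType) (e : rel V) : Prop :=
  exists (a b c : V) (sab sba sbc scb sac : seq V),
    [/\ uniq [:: a; b; c],
        [/\ dipath e a b sab, dipath e b a sba, dipath e b c sbc,
            dipath e c b scb & dipath e a c sac],
        uniq (sab ++ sba ++ sbc ++ scb ++ sac) &
        [disjoint [:: a; b; c] & sab ++ sba ++ sbc ++ scb ++ sac]].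

From mathcomp Require Import all_boot zify.

Set Implicit Arguments. Unset Strict Implicit. Unset Printing Implicit Defensive.

(* We prove the stronger statement that a subdivision exists as soon as all
   vertices of a (loopless) digraph on T have out-degree at least 2, except
   one root r, which only needs out-degree at least 1.  In a counterexample
   with |T| minimal, deleting arcs makes these bounds exact; then T spans
   2|T| - 1 arcs, so some vertex w has in-degree at most 1.  If w has no
   in-neighbour, or is the root, we delete it (moving the root to a neighbour).
   Otherwise w has a unique in-neighbour u, and we contract u -> w -> y into
   an arc u -> y for an out-neighbour y of w avoiding u and u's other
   out-neighbour x: a subdivision of the contracted digraph lifts back, since
   at most one of its paths uses the arc u -> y.  If no such y exists, the
   out-neighbours of w are exactly u and x.  Then either x reaches u avoiding
   w, and the digon u <-> w, the arcs u -> x, w -> x and this path form the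
   subdivision, or the vertices reachable from x avoiding w induce a smaller
   digraph of the same kind. *)

Section Digraphs.

Variable V : finType.
Implicit Types (f g : rel V) (A R T : {set V}) (B s : seq V).

Definition add_arc f u y : rel V := [rel a b | f a b || (a == u) && (b == y)].

Lemma dipath_sub f g x y s : subrel f g -> dipath f x y s -> dipath g x y s.
Proof. by move=> fg /andP[fp un]; rewrite /dipath (sub_path fg fp). Qed.

Lemma path_targets (P : pred V) f x p :
  (forall a b, f a b -> P b) -> path f x p -> all P p.
Proof.
move=> fP; elim: p x => //= y p IHp x /andP[fxy yp].
by rewrite (fP _ _ fxy) (IHp y).
Qed.

Lemma dipath_nil f x y : dipath f x y [::] = f x y && (x != y).
Proof. by rewrite /dipath /= !andbT inE. Qed.

Lemma dipath_cons f x y a s :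
  dipath f x y (a :: s) = [&& f x a, x \notin a :: rcons s y & dipath f a y s].
Proof. by rewrite /dipath /= -andbA; congr (_ && _); rewrite andbCA. Qed.

Lemma dipath_inner f x y s : dipath f x y s -> [/\ x \notin s, y \notin s & uniq s].
Proof.
case/andP=> _; rewrite /= rcons_uniq mem_rcons inE negb_or.
by case/andP=> /andP[_ ->] /andP[-> ->].
Qed.

Lemma dipath_expand f u z y x x' s :
  f u z -> f z y -> z \notin x :: rcons s x' -> dipath (add_arc f u y) x x' s ->
  exists s', [/\ dipath f x x' s', {subset s' <= z :: s} &
                 z \in s' -> (u \in x :: s) && (y \in x' :: s)].
Proof.
move=> fuz fzy; elim: s x => [|a s IHs] x.
  rewrite dipath_nil !inE => /norP[zx zx'] /andP[/orP[fxx' | /andP[/eqP xu /eqP x'y]] xx'].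
    by exists [::]; rewrite dipath_nil fxx'.
  subst x x'; exists [:: z]; split=> //; last by rewrite !inE !eqxx.
  by rewrite dipath_cons dipath_nil fuz fzy !inE negb_or eq_sym zx xx' zx'.
rewrite dipath_cons /= in_cons => /norP[zx zs] /and3P[xa xs Pa].
have [s0 [Ps0 s0s zs0]] := IHs a zs Pa.
have xs0 : x \notin a :: rcons s0 x'.
  move: xs; rewrite !inE !mem_rcons !inE; apply: contra => /or3P[-> | -> | /s0s]; rewrite ?orbT //.
  by rewrite inE eq_sym (negbTE zx) /= => ->; rewrite !orbT.
case fxa: (f x a).
  exists (a :: s0); split.
  - by rewrite dipath_cons fxa xs0.
  - move=> t /predU1P[-> | /s0s]; rewrite !inE ?eqxx ?orbT //.
    by case/predU1P=> ->; rewrite ?eqxx ?orbT.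
  - rewrite inE; case: eqP zs => [-> | _ _ /zs0 /andP[ua ya]]; first by rewrite inE eqxx.
    by rewrite !inE in ua ya *; rewrite ua orbT; case/orP: ya => ->; rewrite ?orbT.
move: xa; rewrite /add_arc /= fxa => /andP[/eqP xu /eqP ay]; subst x a.
have zNs0 : z \notin s0.
  apply: contra xs => /zs0 /andP[+ _].
  by rewrite !inE mem_rcons inE => /predU1P[->|->]; rewrite ?eqxx ?orbT.
have zs0' : z \notin y :: rcons s0 x'.
  rewrite !inE mem_rcons inE (negbTE zNs0) orbF.
  by apply: contra zs => /orP[]/eqP->; rewrite !inE mem_rcons inE eqxx ?orbT.
exists [:: z, y & s0]; split.
- by rewrite dipath_cons dipath_cons fzy zs0' Ps0 fuz inE negb_or eq_sym zx xs0 !andbT.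
- move=> t; rewrite !inE => /or3P[-> | -> | /s0s]; rewrite ?orbT //.
  by rewrite inE => /orP[]->; rewrite ?orbT.
- by rewrite !inE !eqxx ?orbT.
Qed.

(* [(x, y, s)] stands for a path from x to y with interior s; the paths of a
   linkage join branch vertices in [B] and are internally disjoint. *)
Definition interior (ps : seq (V * V * seq V)) : seq V := flatten (map snd ps).

Definition linkage f B ps :=
  [/\ all (fun p => [&& p.1.1 \in B, p.1.2 \in B & dipath f p.1.1 p.1.2 p.2]) ps,
      uniq (interior ps) & [disjoint B & interior ps]].

(* Necessary for the path [p] to traverse the arc (u, y). *)
Definition uses u y (p : V * V * seq V) := (u \in p.1.1 :: p.2) && (y \in p.1.2 :: p.2).

Lemma disjoint_sub_cons (X Y : seq V) z B :
  {subset X <= z :: Y} -> z \notin B -> [disjoint Y & B] -> [disjoint X & B].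
Proof.
move=> XY zB dYB; rewrite disjoint_has; apply/hasPn => t /XY.
by rewrite inE => /predU1P[-> | /(disjointFr dYB) ->].
Qed.

Lemma linkage_sub f g B ps : subrel f g -> linkage f B ps -> linkage g B ps.
Proof.
move=> fg [Pps ups dps]; split=> //.
by apply/allP => p /(allP Pps) /and3P[-> -> /(dipath_sub fg)].
Qed.

Lemma meet_eq_heads x x' s s' t :
  t \in x :: s -> t \in x' :: s' -> x \notin s' -> x' \notin s -> ~~ has (mem s) s' -> x = x'.
Proof.
move=> /predU1P[-> | ts] /predU1P[<- | ts'] // xs' x's /hasPn dss.
- by case/negP: xs'.
- by case/negP: x's.
- by case/negP: (dss t ts').
Qed.

Lemma linkage_uses_ends f B p ps q u y :
  linkage f B (p :: ps) -> q \in ps -> uses u y p -> uses u y q -> p.1 = q.1.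
Proof.
case: p q => [[x x'] s] [[x2 x2'] s2] [/= /andP[/and3P[xB x'B _] Pps]].
rewrite /interior /= cat_uniq disjoint_sym disjoint_cat => /and3P[_ dss2 _] /andP[dsB dpsB] qps.
have /and3P[x2B x2'B _] := allP Pps _ qps.
have s2ps : {subset s2 <= interior ps}.
  by move=> t ts2; apply/flattenP; exists s2 => //; apply: map_f qps.
have notin_s2 v : v \in B -> v \notin s2.
  by move=> vB; apply/negP => /s2ps; rewrite (disjointFl dpsB vB).
have notin_s v : v \in B -> v \notin s by move=> vB; rewrite (disjointFl dsB vB).
have ds : ~~ has (mem s) s2.
  by apply: contra dss2 => /hasP[t ts2 ts]; apply/hasP; exists t => //; apply: s2ps.
rewrite /uses /= => /andP[us ys] /andP[us2 ys2].
rewrite (meet_eq_heads us us2 (notin_s2 _ xB) (notin_s _ x2B) ds).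
by rewrite (meet_eq_heads ys ys2 (notin_s2 _ x'B) (notin_s _ x2'B) ds).
Qed.

Lemma linkage_expand f u z y B ps :
  f u z -> f z y -> z \notin B -> z \notin interior ps -> uniq (map fst ps) ->
  linkage (add_arc f u y) B ps ->
  exists ps', [/\ map fst ps' = map fst ps, linkage f B ps',
                  {subset interior ps' <= z :: interior ps} &
                  z \in interior ps' -> has (uses u y) ps].
Proof.
move=> fuz fzy zB; elim: ps => [|[[x x'] s] ps IHps] zps ups Lps; first by exists [::].
have [/= /andP[/and3P[xB x'B Ps] Pps] ups' dps] := Lps.
move: zps ups; rewrite /interior /= mem_cat negb_or => /andP[zs zps] /andP[xps ups].
move: ups' dps; rewrite /interior /= cat_uniq disjoint_sym disjoint_cat.
move=> /and3P[_ dsps ups'] /andP[dsB dpsB].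
have Lps0 : linkage (add_arc f u y) B ps by split; rewrite // disjoint_sym.
have [ps' [Eps' [Pps' ups'' dBps'] sub' zuse']] := IHps zps ups Lps0.
have zx : z \notin x :: rcons s x'.
  rewrite in_cons mem_rcons in_cons (negbTE zs) orbF.
  by apply/norP; split; apply: contraNneq zB => ->.
have [s' [Ps' s's zs']] := dipath_expand fuz fzy zx Ps.
exists ((x, x', s') :: ps'); split.
- by rewrite /= Eps'.
- split.
  + by rewrite /= xB x'B Ps'.
  + have [_ _ us'] := dipath_inner Ps'.
    rewrite /interior /= cat_uniq ups'' us' andbT.
    apply/hasPn => t tps'; apply/negP => ts'.
    move: (s's t ts') (sub' t tps'); rewrite !inE => /predU1P[tz | ts] /predU1P[tz' | tps].
    * subst t; have /hasP[q qps uq] := zuse' tps'.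
      have /= Eq := linkage_uses_ends Lps qps (zs' ts') uq.
      by rewrite Eq map_f in xps.
    * by rewrite -tz tps in zps.
    * by rewrite -tz' ts in zs.
    * by case/hasP: dsps; exists t.
  + rewrite /interior /= disjoint_sym disjoint_cat.
    by rewrite (disjoint_sub_cons s's zB dsB) (disjoint_sub_cons sub' zB) // disjoint_sym.
- move=> t; rewrite /interior /= !mem_cat => /orP[/s's | /sub']; rewrite !inE ?mem_cat.
    by case/predU1P=> ->; rewrite ?eqxx ?orbT.
  by case/predU1P=> ->; rewrite ?eqxx ?orbT.
- by rewrite /interior /= mem_cat => /orP[/zs' uxy | /zuse' ->]; rewrite ?orbT // /uses /= uxy.
Qed.

Definition K3e_ends a b c : seq (V * V) := [:: (a, b); (b, a); (b, c); (c, b); (a, c)].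

Lemma has_subdivP f :
  has_subdiv_K3_minus_e f <->
  exists a b c ps, [/\ uniq [:: a; b; c], map fst ps = K3e_ends a b c & linkage f [:: a; b; c] ps].
Proof.
split.
  move=> [a [b [c [sab [sba [sbc [scb [sac [abc [Pab Pba Pbc Pcb Pac] uS dS]]]]]]]]].
  exists a, b, c, [:: (a, b, sab); (b, a, sba); (b, c, sbc); (c, b, scb); (a, c, sac)].
  by split; rewrite // /linkage /interior /= !cats0 !inE !eqxx ?orbT /= Pab Pba Pbc Pcb Pac.
move=> [a [b [c [ps [abc Eps [Pps uS dS]]]]]].
move: ps Eps Pps uS dS.
case=> [|[? sab] [|[? sba] [|[? sbc] [|[? scb] [|[? sac] []]]]]] //= [-> -> -> -> ->].
rewrite /interior /= !cats0 !inE !eqxx ?orbT /= !andbT => /and5P[Pab Pba Pbc Pcb Pac] uS dS.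
by exists a, b, c, sab, sba, sbc, scb, sac.
Qed.

Lemma has_subdiv_sub f g : subrel f g -> has_subdiv_K3_minus_e f -> has_subdiv_K3_minus_e g.
Proof.
move=> fg /has_subdivP[a [b [c [ps [abc Eps Lps]]]]].
by apply/has_subdivP; exists a, b, c, ps; split; last exact: linkage_sub Lps.
Qed.

Lemma uniq_K3e_ends a b c : uniq [:: a; b; c] -> uniq (K3e_ends a b c).
Proof.
rewrite /= !inE !negb_or !xpair_eqE => /andP[/andP[ab ac] /andP[bc _]].
by rewrite (negbTE ab) (negbTE ac) (negbTE bc) !(eq_sym _ a) (negbTE ab) (negbTE ac) !andbF.
Qed.

Lemma has_subdiv_expand f g u z y :
  f u z -> f z y -> (forall a b, g a b -> add_arc f u y a b && (b != z)) ->
  has_subdiv_K3_minus_e g -> has_subdiv_K3_minus_e f.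
Proof.
move=> fuz fzy gf /has_subdivP[a [b [c [ps [abc Eps Lps]]]]].
have [Pps _ _] := Lps.
have zfree p : p \in ps -> z \notin rcons p.2 p.1.2.
  move=> /(allP Pps) /and3P[_ _ /andP[Pp _]].
  have /allP Pz := path_targets (P := predC1 z) (fun a' b' gab => (andP (gf a' b' gab)).2) Pp.
  by apply/negP => /Pz; rewrite /= eqxx.
have zps : z \notin interior ps.
  apply/negP => /flattenP[_ /mapP[p pps ->] zp].
  by case/negP: (zfree p pps); rewrite mem_rcons inE zp orbT.
have end_free v w : (v, w) \in K3e_ends a b c -> w != z.
  rewrite -Eps => /mapP[[[v' w'] s0] pps [_ ->]].
  by apply: contraNneq (zfree _ pps) => ->; rewrite mem_rcons mem_head.
have zB : z \notin [:: a; b; c].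
  rewrite !inE !negb_or !(eq_sym z).
  by rewrite (end_free b a) ?(end_free a b) ?(end_free b c) // !inE eqxx ?orbT.
have Ladd : linkage (add_arc f u y) [:: a; b; c] ps.
  by apply: linkage_sub Lps => a' b' /gf /andP[].
have ups : uniq (map fst ps) by rewrite Eps uniq_K3e_ends.
have [ps' [Eps' Lps' _ _]] := linkage_expand fuz fzy zB zps ups Ladd.
by apply/has_subdivP; exists a, b, c, ps'; rewrite Eps'.
Qed.

Lemma has_subdiv_digon_path f w u x s :
  uniq [:: w; u; x] -> f w u -> f u w -> f u x -> f w x -> dipath f x u s -> w \notin s ->
  has_subdiv_K3_minus_e f.
Proof.
move=> wux fwu fuw fux fwx Pxu ws; have [xs us uS] := dipath_inner Pxu.
move: (wux); rewrite /= !inE !negb_or => /andP[/andP[wu wx] /andP[ux _]].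
exists w, u, x, [::], [::], [::], s, [::]; split; rewrite /= ?cats0 //.
  by split; rewrite // dipath_nil ?fwu ?fuw ?fux ?fwx // eq_sym.
by rewrite disjoint_has /= (negbTE ws) (negbTE us) (negbTE xs).
Qed.

Definition restr A f : rel V := [rel a b | [&& a \in A, b \in A & f a b]].

Definition del_arc f v w : rel V := [rel a b | f a b && ((a, b) != (v, w))].

Definition indeg f w := #|[set v | f v w]|.

Definition within T f := forall a b, f a b -> (a \in T) && (b \in T).

Lemma connect_within T f x t : within T f -> x \in T -> connect f x t -> t \in T.
Proof.
move=> fT xT /connectP[p xp ->].
have /allP pT := path_targets (fun a b fab => (andP (fT a b fab)).2) xp.
by have := mem_last x p; rewrite inE => /predU1P[-> | /pT].
Qed.

Lemma irreflexive_restr A f : irreflexive f -> irreflexive (restr A f).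
Proof. by move=> irrf a; rewrite /restr /= irrf !andbF. Qed.

Lemma within_restr A f : within A (restr A f).
Proof. by move=> a b /and3P[-> ->]. Qed.

Lemma outdeg_gt0 f v x : f v x -> 0 < outdeg f v.
Proof. by move=> fvx; apply/card_gt0P; exists x; rewrite inE. Qed.

Lemma outdeg_gt1 f v x y : f v x -> f v y -> x != y -> 1 < outdeg f v.
Proof.
move=> fvx fvy xy; rewrite /outdeg (cardsD1 x) inE fvx /= add1n ltnS card_gt0.
by apply/set0Pn; exists y; rewrite !inE eq_sym xy fvy.
Qed.

Lemma outdeg_gt1_other f v w : 1 < outdeg f v -> exists2 x, f v x & x != w.
Proof.
rewrite /outdeg (cardsD1 w) => deg.
have /card_gt0P[x] : 0 < #|[set t | f v t] :\ w| by move: deg; case: (w \in _) => /=; lia.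
by rewrite !inE => /andP[xw fvx]; exists x.
Qed.

Lemma outdeg2_cover f w u x :
  outdeg f w = 2 -> (forall y, f w y -> y \in [:: u; x]) -> [/\ f w u, f w x & u != x].
Proof.
move=> deg cover.
have sub : [set y | f w y] \subset [set u; x].
  by apply/subsetP => y; rewrite !inE => /cover; rewrite !inE.
have ux : u != x by move: (subset_leq_card sub); rewrite -/(outdeg f w) deg cards2; case: (u != x).
have /subset_cardP/(_ sub) eqS : #|[set y | f w y]| = #|[set u; x]|.
  by rewrite -/(outdeg f w) deg cards2 ux.
by move: (eqS u) (eqS x); rewrite !inE !eqxx orbT /= => -> ->.
Qed.

Lemma subrel_outdeg f g v : subrel f g -> outdeg f v <= outdeg g v.
Proof. by move=> fg; apply/subset_leq_card/subsetP => t; rewrite !inE; apply: fg. Qed.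

Lemma outdeg_restrD1 T f d v :
  within T f -> v \in T :\ d -> outdeg f v = f v d + outdeg (restr (T :\ d) f) v.
Proof.
move=> fT vT; rewrite /outdeg (cardsD1 d) inE; congr (_ + _); apply: eq_card => t.
rewrite /restr /= vT !inE; case fvt: (f v t); rewrite ?andbF //.
by have /andP[_ ->] := fT _ _ fvt; rewrite !andbT.
Qed.

Lemma outdeg_del_arc f v w a : f v w -> outdeg f a = (a == v) + outdeg (del_arc f v w) a.
Proof.
move=> fvw; case: eqP => [-> | /eqP av]; last first.
  by apply: eq_card => t; rewrite !inE /del_arc /= xpair_eqE (negbTE av) andbT.
rewrite /outdeg (cardsD1 w [set t | f v t]) inE fvw; congr (_ + _); apply: eq_card => t.
by rewrite !inE /del_arc /= xpair_eqE eqxx andbC.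
Qed.

Lemma card_within T (P : pred V) : {subset P <= T} -> #|[set t | P t]| = \sum_(t in T) P t.
Proof.
move=> PT; rewrite -sum1_card big_mkcond [RHS]big_mkcond; apply: eq_bigr => t _.
by rewrite inE; case Pt: (P t); [rewrite (PT t Pt) | case: (t \in T)].
Qed.

Lemma sum_outdeg_indeg T f : within T f -> \sum_(v in T) outdeg f v = \sum_(w in T) indeg f w.
Proof.
move=> fT; rewrite (eq_bigr (fun v => \sum_(w in T) f v w)); last first.
  by move=> v _; apply: card_within => w /(fT v)/andP[].
rewrite exchange_big; apply: eq_bigr => w _; rewrite /indeg (card_within (T := T) (P := f^~ w)) //.
by move=> v /(fT v)/andP[].
Qed.

Lemma exists_low_indeg T f r :
  within T f -> r \in T -> {in T, forall v, outdeg f v = (v != r).+1} ->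
  exists2 w, w \in T & indeg f w <= 1.
Proof.
move=> fT rT deg; case: (boolP [exists w in T, indeg f w <= 1]) => [/exists_inP // |].
move=> /exists_inPn low.
have: \sum_(v in T) 2 <= \sum_(v in T) outdeg f v.
  by rewrite sum_outdeg_indeg //; apply: leq_sum => w /low; rewrite -ltnNge.
rewrite (eq_bigr _ deg) !(bigD1 r rT) /= eqxx.
by rewrite [X in _ <= _ + X](eq_bigr (fun=> 2)) => [|v /andP[_ ->]]; rewrite ?leq_add2r.
Qed.

Definition rooted T f r :=
  [/\ irreflexive f, within T f, r \in T & {in T, forall v, (v != r).+1 <= outdeg f v}].

Lemma rooted_exact T f r :
  rooted T f r ->
  exists2 g, subrel g f & rooted T g r /\ {in T, forall v, outdeg g v = (v != r).+1}.
Proof.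
have [n] := ubnP #|[set p : V * V | f p.1 p.2]|; elim: n f => // n IHn f arcs_f.
move=> [irrf fT rT degf].
case: (pickP [pred v in T | (v != r).+1 < outdeg f v]) => [v /andP[vT big] | exact]; last first.
  exists f => //; split=> // v vT; apply/eqP; rewrite eqn_leq degf // andbT leqNgt.
  by have := exact v; rewrite /= vT /= => ->.
have /card_gt0P[w] : 0 < outdeg f v by apply: leq_ltn_trans big.
rewrite inE => fvw.
have [||g gf [rooted_g exact_g]] := IHn (del_arc f v w).
- apply: leq_trans _ (ltnSE arcs_f); apply: proper_card; apply/properP; split.
    by apply/subsetP => p; rewrite !inE => /andP[].
  by exists (v, w); rewrite !inE /del_arc /= ?fvw ?eqxx.
- split=> // [a | a b /andP[/fT] // | a aT]; first by rewrite /del_arc /= irrf.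
  have := degf a aT; rewrite (outdeg_del_arc a fvw).
  case: (eqVneq a v) => [-> _ | _ //]; move: big.
  by rewrite (outdeg_del_arc v fvw) eqxx add1n ltnS.
- by exists g => // a b /gf /andP[].
Qed.

Lemma rooted_delete T f r d r' :
  rooted T f r -> r' \in T :\ d -> d = r \/ r' = r -> (forall v, f v d -> v = r') ->
  0 < outdeg (restr (T :\ d) f) r' -> rooted (T :\ d) (restr (T :\ d) f) r'.
Proof.
move=> [irrf fT rT degf] r'T dr ind_d deg_r'.
split=> //; [exact: irreflexive_restr | exact: within_restr | move=> v vT].
case: (eqVneq v r') => [-> // | vr'].
have vr : v != r by case: dr => <- //; move: vT; rewrite in_setD1 => /andP[->].
have fvd : f v d = false by apply: contraNF vr' => /ind_d ->.
have := degf v (subsetP (subD1set T d) v vT).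
by rewrite (outdeg_restrD1 fT vT) fvd vr.
Qed.

Lemma rooted_contract T f r u w y :
  rooted T f r -> w \in T -> w != r -> (forall v, f v w -> v = u) -> f u w -> f w y -> y != u ->
  (u != r -> exists2 x, f u x & x \notin [:: w; y]) ->
  rooted (T :\ w) (restr (T :\ w) (add_arc f u y)) r.
Proof.
move=> [irrf fT rT degf] wT wr ind_w fuw fwy yu other.
have [/andP[uT _] /andP[_ yT]] := (fT _ _ fuw, fT _ _ fwy).
have uw : u != w by apply: contraTneq fuw => ->; rewrite irrf.
have yw : y != w by apply: contraTneq fwy => ->; rewrite irrf.
have gu t : t \in T -> t != w -> add_arc f u y u t -> restr (T :\ w) (add_arc f u y) u t.
  by move=> tT tw fut; rewrite /restr /= !in_setD1 uw uT tw tT.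
split=> //.
- move=> a; rewrite /restr /add_arc /= irrf /=; apply/negP => /and3P[_ _ /andP[/eqP-> /eqP]].
  by apply/eqP; rewrite eq_sym.
- exact: within_restr.
- by rewrite !inE eq_sym wr.
move=> v vT; case: (eqVneq v u) => [-> | vu].
  case: (eqVneq u r) => [_ | ur].
    by apply: (outdeg_gt0 (x := y)); rewrite gu // /add_arc /= !eqxx orbT.
  have [x fux] := other ur; rewrite !inE negb_or => /andP[xw xy].
  have [_ xT] := andP (fT _ _ fux).
  by apply: (outdeg_gt1 (x := x) (y := y)); rewrite ?gu // /add_arc /= ?fux ?eqxx ?orbT.
have fvw : f v w = false by apply: contraNF vu => /ind_w ->.
apply: leq_trans (subrel_outdeg _ (_ : subrel (restr (T :\ w) f) _)); last first.
  by move=> a b /and3P[aT bT fab]; rewrite /restr /add_arc /= aT bT fab.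
have := degf v (subsetP (subD1set T w) v vT).
by rewrite (outdeg_restrD1 fT vT) fvw.
Qed.

Lemma rooted_restr_closed T f r R x :
  rooted T f r -> R \subset T -> x \in R -> (forall t t', t \in R -> f t t' -> t' \in R) ->
  rooted R (restr R f) (if r \in R then r else x).
Proof.
move=> [irrf fT rT degf] RT xR closedR.
split; [exact: irreflexive_restr | exact: within_restr | by case: ifP | move=> v vR].
have -> : outdeg (restr R f) v = outdeg f v.
  apply: eq_card => t; rewrite !inE /restr /= vR.
  by case fvt: (f v t); rewrite ?andbF ?(closedR v t vR fvt).
apply: leq_trans (degf v (subsetP RT v vR)); case: ifP => // rR.
by rewrite (_ : v != r) //; [case: (v != x) | apply: contraFneq rR => <-].
Qed.

Section ExactRooted.

Variables (T : {set V}) (f : rel V) (r : V).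
Hypothesis IH : forall T' g r', T' \proper T -> rooted T' g r' -> has_subdiv_K3_minus_e g.
Hypothesis rooted_f : rooted T f r.
Hypothesis exact_f : {in T, forall v, outdeg f v = (v != r).+1}.

Lemma has_subdiv_delete d r' :
  d \in T -> r' \in T :\ d -> d = r \/ r' = r -> (forall v, f v d -> v = r') ->
  f r' d < outdeg f r' -> has_subdiv_K3_minus_e f.
Proof.
have [_ fT _ _] := rooted_f; move=> dT r'T dr ind_d deg.
have r'deg : 0 < outdeg (restr (T :\ d) f) r'.
  by move: deg; rewrite (outdeg_restrD1 fT r'T); case: (f r' d).
apply: (has_subdiv_sub (f := restr (T :\ d) f)); first by move=> a b /and3P[].
exact: IH (properD1 dT) (rooted_delete rooted_f r'T dr ind_d r'deg).
Qed.

Lemma has_subdiv_digon_case u w x :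
  (forall v, f v w -> v = u) -> f u w -> f w u -> f u x -> f w x -> u != x ->
  has_subdiv_K3_minus_e f.
Proof.
have [irrf fT _ _] := rooted_f; move=> ind_w fuw fwu fux fwx ux.
have [/andP[uT _] /andP[_ xT]] := (fT _ _ fuw, fT _ _ fux).
have wu : w != u by apply: contraTneq fwu => ->; rewrite irrf.
have wx : w != x by apply: contraTneq fwx => ->; rewrite irrf.
pose h := [rel a b | f a b && (b != w)].
pose R := [set t | connect h x t].
have hf : subrel h f by move=> a b /andP[].
case: (boolP (u \in R)) => [uR | uNR].
  move: uR; rewrite inE => /connectP[p hp ulast]; case/shortenP: hp ulast => p' hp' up' _.
  case/lastP: p' hp' up' => [_ _ /= /eqP | s t hp' up']; first by rewrite (negbTE ux).
  rewrite last_rcons => ut; subst t.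
  have /allP sw := path_targets (P := predC1 w) (fun a b hab => (andP hab).2) hp'.
  apply: (has_subdiv_digon_path _ fwu fuw fux fwx (s := s)).
  - by rewrite /= !inE !negb_or wu wx ux.
  - by rewrite /dipath (sub_path hf hp').
  - by apply/negP => ws; have := sw w; rewrite mem_rcons inE ws orbT /= eqxx => /(_ isT).
have RT : R \subset T by apply/subsetP => t; rewrite inE; apply: connect_within xT => a b /hf /fT.
have xR : x \in R by rewrite inE connect0.
have closedR t t' : t \in R -> f t t' -> t' \in R.
  rewrite !inE => xt ftt'; apply: (connect_trans xt (connect1 _)); apply/andP; split=> //.
  by apply: contraNneq uNR => t'w; move: ftt'; rewrite t'w => /ind_w <-; rewrite /R inE.
have /IH : R \proper T by apply/properP; split=> //; exists u.
move=> /(_ _ _ (rooted_restr_closed rooted_f RT xR closedR)).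
by apply: has_subdiv_sub => a b /and3P[].
Qed.

Lemma has_subdiv_indeg1 u w :
  w \in T -> w != r -> f u w -> (forall v, f v w -> v = u) -> has_subdiv_K3_minus_e f.
Proof.
have [_ fT _ degf] := rooted_f; move=> wT wr fuw ind_w.
have degw : outdeg f w = 2 by rewrite exact_f // wr.
have contract y : f w y -> y != u -> (u != r -> exists2 x, f u x & x \notin [:: w; y]) ->
    has_subdiv_K3_minus_e f.
  move=> fwy yu other; apply: (has_subdiv_expand fuw fwy (g := restr (T :\ w) (add_arc f u y))).
    by move=> a b /and3P[_]; rewrite in_setD1 => /andP[-> _] ->.
  exact: IH (properD1 wT) (rooted_contract rooted_f wT wr ind_w fuw fwy yu other).
case: (eqVneq u r) => [ur | ur].
  have [y fwy yu] : exists2 y, f w y & y != u by apply: outdeg_gt1_other; rewrite degw.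
  by apply: (contract y) => //; rewrite ur eqxx.
have /andP[uT _] := fT _ _ fuw.
have [x fux xw] : exists2 x, f u x & x != w.
  by apply: outdeg_gt1_other; have := degf u uT; rewrite ur.
case: (pickP [pred y | f w y && (y \notin [:: u; x])]) => [y /andP[fwy yux] | none].
  apply: (contract y fwy) => [|_]; first by apply: contraNneq yux => ->; rewrite mem_head.
  by exists x => //; rewrite !inE negb_or xw; apply: contraNneq yux => <-; rewrite !inE eqxx orbT.
have [fwu fwx ux] : [/\ f w u, f w x & u != x].
  by apply: (outdeg2_cover degw) => y fwy; move: (none y); rewrite /= fwy => /negbFE.
exact: has_subdiv_digon_case ind_w fuw fwu fux fwx ux.
Qed.

Lemma has_subdiv_exact : has_subdiv_K3_minus_e f.
Proof.
have [irrf fT rT _] := rooted_f.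
have [w wT low] := exists_low_indeg fT rT exact_f.
case: (pickP [pred v | f v w]) => [u /= fuw | no_in]; last first.
  have {}no_in v : f v w = false := no_in v.
  case: (eqVneq w r) => [wr | wr]; last first.
    apply: (has_subdiv_delete wT (r' := r)) => [| | v | ]; rewrite ?no_in ?exact_f //.
    - by rewrite !inE eq_sym wr.
    - by right.
  subst w; have /card_gt0P[y] : 0 < outdeg f r by rewrite exact_f.
  rewrite inE => fry; have [_ yT] := andP (fT _ _ fry).
  have yr : y != r by apply: contraTneq fry => ->; rewrite irrf.
  apply: (has_subdiv_delete wT (r' := y)) => [| | v | ]; rewrite ?no_in ?exact_f ?yr //.
  - by rewrite !inE yr.
  - by left.
(* [indeg f w] is the out-degree of w in the converse relation. *)
have ind_w v : f v w -> v = u.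
  move=> fvw; apply/eqP; apply: contraLR low => vu; rewrite -ltnNge.
  exact: (outdeg_gt1 (f := [rel a b | f b a]) fvw fuw).
case: (eqVneq w r) => [wr | wr]; last exact: has_subdiv_indeg1 wT wr fuw ind_w.
subst w; have /andP[uT _] := fT _ _ fuw.
have ur : u != r by apply: contraTneq fuw => ->; rewrite irrf.
apply: (has_subdiv_delete wT _ _ ind_w) => [| | ]; rewrite ?fuw ?exact_f ?ur //.
- by rewrite !inE ur.
- by left.
Qed.

End ExactRooted.

Lemma rooted_has_subdiv T f r : rooted T f r -> has_subdiv_K3_minus_e f.
Proof.
have [n] := ubnP #|T|; elim: n T f r => // n IHn T f r cardT rooted_f.
have [g gf [rooted_g exact_g]] := rooted_exact rooted_f.
apply: has_subdiv_sub gf _; apply: has_subdiv_exact rooted_g exact_g.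
by move=> T' g' r' /proper_card ltT; apply: IHn; apply: leq_trans ltT _.
Qed.

End Digraphs.

Theorem theorem1p2 (V : finType) (e : rel V) :
  irreflexive e -> 0 < #|V| -> (forall v : V, 2 <= outdeg e v) ->
  has_subdiv_K3_minus_e e.
Proof.
move=> irr_e /card_gt0P[r _] deg_e.
apply: (rooted_has_subdiv (T := [set: V]) (r := r)).
split=> // [a b _ | v _]; first by rewrite !inE.
by apply: leq_trans (deg_e v); case: (v != r).
Qed.
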